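(* Let $0<q<1$, let $n,i$ be integers with $1\le i\le n$, and let $x\in[0,1]$. Then $$\frac{1}{([1-x]_q+[x]_q)^{n-i}}\sum_{k=i-1}^n\frac{\binom{k}{i}}{\binom{n}{i}}B_{k,n}(x,q)=\sum_{k=0}^i q^{\binom{k}{2}}\binom{x}{k}_q[k]_q!\,S(i,k:q).$$
   Context: Let $q$ be a real number with $0<q<1$. For real $x$, the $q$-number is $[x]_q=\frac{1-q^x}{1-q}$. For a nonnegative integer $k$ and $x\in[0,1]$, the modified $q$-Bernstein polynomials $B_{k,n}(x,q)$, $n=0,1,2,\dots$, are defined by the generating function $$\frac{t^k e^{[1-x]_q t}[x]_q^k}{k!}=\sum_{n=0}^\infty B_{k,n}(x,q)\frac{t^n}{n!}.$$ Here $\binom{k}{i}=0$ when $k<i$. Let $[0]_q!=1$ and $[k]_q!=[k]_q[k-1]_q\cdots[1]_q$. The Gaussian binomial coefficient is $\binom{k}{j}_q=\frac{[k]_q!}{[j]_q![k-j]_q!}$ for $0\le j\le k$. For real $x$, $\binom{x}{k}_q=\frac{[x]_q[x-1]_q\cdots[x-k+1]_q}{[k]_q!}$, with $\binom{x}{0}_q=1$. The $q$-Stirling numbers of the second kind are $$S(n,k:q)=\frac{q^{-\binom{k}{2}}}{[k]_q!}\sum_{j=0}^k(-1)^j q^{\binom{j}{2}}\binom{k}{j}_q[k-j]_q^{\,n},$$ with the convention $0^0=1$. *)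

From HB Require Import structures.
From mathcomp Require Import all_boot all_order all_algebra.
From mathcomp Require Import reals exp.
Set Implicit Arguments. Unset Strict Implicit. Unset Printing Implicit Defensive.
Import Order.TTheory GRing.Theory Num.Theory.
Local Open Scope ring_scope.

Definition qnum {R : realType} (q x : R) : R := (1 - powR q x) / (1 - q).

Definition qfact {R : realType} (q : R) (k : nat) : R :=
  \prod_(1 <= j < k.+1) qnum q j%:R.

Definition qgauss {R : realType} (q : R) (k j : nat) : R :=
  qfact q k / (qfact q j * qfact q (k - j)).

Definition qbinomR {R : realType} (q x : R) (k : nat) : R :=
  (\prod_(0 <= j < k) qnum q (x - j%:R)) / qfact q k.

(* q-Stirling numbers of the second kind S(n,k:q) (0^0 = 1 via ^+ 0) *)
Definition qStirling2 {R : realType} (q : R) (n k : nat) : R :=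
  q ^- 'C(k, 2) / qfact q k *
  \sum_(0 <= j < k.+1)
     (-1) ^+ j * q ^+ 'C(j, 2) * qgauss q k j * (qnum q (k - j)%:R) ^+ n.

(* Modified q-Bernstein polynomial B_{k,n}(x,q): the coefficient of t^n/n!
   in t^k e^{[1-x]_q t} [x]_q^k / k!, i.e. 'C(n,k) [x]_q^k [1-x]_q^(n-k)
   for n >= k and 0 for n < k (here 'C(n,k) = 0 when n < k). *)
Definition qBernstein {R : realType} (q x : R) (k n : nat) : R :=
  ('C(n, k))%:R * (qnum q x) ^+ k * (qnum q (1 - x)) ^+ (n - k).

From mathcomp Require Import all_boot all_order all_algebra.
From mathcomp Require Import reals exp ring.
Import Order.TTheory GRing.Theory Num.Theory.
Set Implicit Arguments.
Local Open Scope ring_scope.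

(* Write E(n,k) := [qStirling2_sum q n k] = q^C(k,2) [k]_q! S(n,k:q).  Splitting one
   factor [k+1-j]_q = [k+1]_q - q^(k+1-j) [j]_q in its summands and applying the q-Pascal
   rules gives E(n+1,k+1) = [k+1]_q (E(n,k+1) + q^k E(n,k)) and E(0,k+1) = 0, hence
   E(n,k) = 0 for n < k.  Combined with [x]_q = [k]_q + q^k [x-k]_q, induction on n gives
   the q-Newton expansion [x]_q^n = sum_k binom(x,k)_q E(n,k), so the right-hand side is
   [x]_q^i.  On the left, C(k,i) C(n,k) = C(n,i) C(n-i,k-i) and the binomial theorem turn
   the sum into C(n,i) [x]_q^i ([1-x]_q + [x]_q)^(n-i). *)

Lemma bin_addn_mul (i j p : nat) :
  ('C(i + j, i) * 'C(i + p, i + j) = 'C(i + p, i) * 'C(p, j))%N.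
Proof.
have [le_jp | lt_pj] := leqP j p; last first.
  by rewrite (@bin_small p j) // (@bin_small (i + p)) ?muln0 // ltn_add2l.
have fact_ij := bin_fact (leq_addr j i); rewrite addKn in fact_ij.
have fact_ipj := @bin_fact (i + p) (i + j); rewrite leq_add2l subnDl in fact_ipj.
have fact_pj := bin_fact le_jp.
have fact_ip := bin_fact (leq_addr p i); rewrite addKn in fact_ip.
apply/eqP; rewrite -(eqn_pmul2r (fact_gt0 i)) -(eqn_pmul2r (fact_gt0 j))
  -(eqn_pmul2r (fact_gt0 (p - j))); apply/eqP.
transitivity (i + p)`!%N; first by rewrite -(fact_ipj le_jp) -fact_ij; ring.
by rewrite -fact_ip -fact_pj; ring.
Qed.

Lemma binomial_factorial_moment (R : comPzRingType) (a b : R) (i n : nat) :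
  (i <= n)%N ->
  \sum_(i <= k < n.+1) 'C(k, i)%:R * ('C(n, k)%:R * a ^+ k * b ^+ (n - k))
  = 'C(n, i)%:R * a ^+ i * (b + a) ^+ (n - i).
Proof.
move=> /subnKC <-; set p := (n - i)%N; rewrite addKn.
rewrite -{1}[i]add0n big_addn subSn ?leq_addr // addKn exprDn big_mkord mulr_sumr.
apply: eq_bigr => j _; rewrite [(j + i)%N]addnC subnDl exprD -mulr_natr.
have binE : 'C(i + j, i)%:R * 'C(i + p, i + j)%:R = 'C(i + p, i)%:R * 'C(p, j)%:R :> R.
  by rewrite -!natrM bin_addn_mul.
transitivity ('C(i + j, i)%:R * 'C(i + p, i + j)%:R * (a ^+ i * a ^+ j) * b ^+ (p - j));
  first by ring.
by rewrite binE; ring.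
Qed.

Definition qStirling2_sum {R : realType} (q : R) (n k : nat) : R :=
  \sum_(0 <= j < k.+1)
     (-1) ^+ j * q ^+ 'C(j, 2) * qgauss q k j * qnum q (k - j)%:R ^+ n.

Section QCalculus.

Variables (R : realType) (q : R).
Hypotheses (q_gt0 : 0 < q) (q_neq1 : q != 1).

Let subq_neq0 : 1 - q != 0.
Proof. by rewrite subr_eq0 eq_sym. Qed.

Lemma qnum_nat (m : nat) : qnum q m%:R = (1 - q ^+ m) / (1 - q).
Proof. by rewrite /qnum powR_mulrn // ltW. Qed.

Lemma qnum0 : qnum q 0%:R = 0.
Proof. by rewrite /qnum powRr0 subrr mul0r. Qed.

Lemma qnumS_neq0 (m : nat) : qnum q m.+1%:R != 0.
Proof.
by rewrite qnum_nat mulf_neq0 ?invr_eq0 // subr_eq0 eq_sym pexpr_eq1 // ltW.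
Qed.

Lemma qnum_split (k : nat) (x : R) :
  qnum q k%:R + q ^+ k * qnum q (x - k%:R) = qnum q x.
Proof.
rewrite qnum_nat /qnum powRB; last by apply/implyP => _; rewrite gt_eqF.
rewrite powR_mulrn ?ltW //.
have qk_neq0 : q ^+ k != 0 by rewrite expf_neq0 // gt_eqF.
by field; rewrite subq_neq0 qk_neq0.
Qed.

Lemma qnum_subn (k j : nat) : (j <= k)%N ->
  qnum q (k - j)%:R = qnum q k%:R - q ^+ (k - j) * qnum q j%:R.
Proof.
move=> le_jk.
by rewrite -(qnum_split (k - j) k%:R) -natrB ?leq_subr // subKn // addrK.
Qed.

Lemma qfactS (k : nat) : qfact q k.+1 = qfact q k * qnum q k.+1%:R.
Proof. by rewrite /qfact big_nat_recr. Qed.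

Lemma qfact_neq0 (k : nat) : qfact q k != 0.
Proof.
elim: k => [|k IHk]; first by rewrite /qfact big_nil oner_neq0.
by rewrite qfactS mulf_neq0 // qnumS_neq0.
Qed.

Lemma qgaussSS_mul (m j : nat) : (j <= m)%N ->
  qgauss q m.+1 j.+1 * qnum q j.+1%:R = qnum q m.+1%:R * qgauss q m j.
Proof.
move=> le_jm; rewrite /qgauss subSS !qfactS.
by field; rewrite ?qfact_neq0 ?qnumS_neq0.
Qed.

Lemma qgaussS_mul (m j : nat) : (j <= m)%N ->
  qgauss q m.+1 j * qnum q (m.+1 - j)%:R = qnum q m.+1%:R * qgauss q m j.
Proof.
move=> le_jm; rewrite /qgauss subSn // !qfactS.
by field; rewrite ?qfact_neq0 ?qnumS_neq0.
Qed.

Lemma qbinomRS (x : R) (k : nat) :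
  qbinomR q x k.+1 * qnum q k.+1%:R = qbinomR q x k * qnum q (x - k%:R).
Proof.
rewrite /qbinomR big_nat_recr //= qfactS.
by field; rewrite ?qfact_neq0 ?qnumS_neq0.
Qed.

Lemma qStirling2_sum_scaled (n k : nat) :
  q ^+ 'C(k, 2) * qfact q k * qStirling2 q n k = qStirling2_sum q n k.
Proof.
rewrite /qStirling2 -/(qStirling2_sum q n k).
by field; rewrite qfact_neq0 expf_neq0 // gt_eqF.
Qed.

Lemma qStirling2_sumS0 (n : nat) : qStirling2_sum q n.+1 0 = 0.
Proof. by rewrite /qStirling2_sum big_nat1 subnn qnum0 expr0n mulr0. Qed.

Lemma sum_qgauss_shift (i m : nat) :
  \sum_(0 <= j < m.+2) (-1) ^+ j * q ^+ 'C(j, 2) * qgauss q m.+1 j *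
      (q ^+ (m.+1 - j) * qnum q j%:R) * qnum q (m.+1 - j)%:R ^+ i
  = - (qnum q m.+1%:R * q ^+ m * qStirling2_sum q i m).
Proof.
rewrite big_nat_recl // qnum0 !mulr0 mul0r add0r /qStirling2_sum.
rewrite !mulr_sumr -sumrN; apply: eq_big_nat => j /andP[_ le_jm].
have signS : (-1) ^+ j.+1 * q ^+ 'C(j.+1, 2)
    = - (q ^+ j * ((-1) ^+ j * q ^+ 'C(j, 2))).
  by rewrite binS bin1 exprD exprS; ring.
have qmE : q ^+ m = q ^+ (m - j) * q ^+ j by rewrite -exprD subnK.
rewrite signS subSS qmE.
transitivity (- (q ^+ (m - j) * q ^+ j * ((-1) ^+ j * q ^+ 'C(j, 2)) *
   (qgauss q m.+1 j.+1 * qnum q j.+1%:R) * qnum q (m - j)%:R ^+ i)); first by ring.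
by rewrite qgaussSS_mul //; ring.
Qed.

Lemma sum_qgauss_compl (m : nat) :
  \sum_(0 <= j < m.+2) (-1) ^+ j * q ^+ 'C(j, 2) * qgauss q m.+1 j *
      qnum q (m.+1 - j)%:R
  = qnum q m.+1%:R * qStirling2_sum q 0 m.
Proof.
rewrite big_nat_recr //= subnn qnum0 mulr0 addr0 /qStirling2_sum mulr_sumr.
apply: eq_big_nat => j /andP[_ le_jm].
by rewrite expr0 mulr1 -mulrA qgaussS_mul //; ring.
Qed.

Lemma qStirling2_sumSS (i m : nat) :
  qStirling2_sum q i.+1 m.+1
  = qnum q m.+1%:R * (qStirling2_sum q i m.+1 + q ^+ m * qStirling2_sum q i m).
Proof.
have peel : qStirling2_sum q i.+1 m.+1 = qnum q m.+1%:R * qStirling2_sum q i m.+1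
   - \sum_(0 <= j < m.+2) (-1) ^+ j * q ^+ 'C(j, 2) * qgauss q m.+1 j *
       (q ^+ (m.+1 - j) * qnum q j%:R) * qnum q (m.+1 - j)%:R ^+ i.
  rewrite /qStirling2_sum mulr_sumr -sumrB; apply: eq_big_nat => j /andP[_ le_jm].
  by rewrite exprS {1}qnum_subn //; ring.
by rewrite peel sum_qgauss_shift; ring.
Qed.

Lemma qStirling2_sum0S (m : nat) :
  qStirling2_sum q 0 m.+1 = (1 - q ^+ m) * qStirling2_sum q 0 m.
Proof.
apply: (mulfI (qnumS_neq0 m)).
have peel : qnum q m.+1%:R * qStirling2_sum q 0 m.+1
  = \sum_(0 <= j < m.+2) (-1) ^+ j * q ^+ 'C(j, 2) * qgauss q m.+1 j *
      qnum q (m.+1 - j)%:R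
  + \sum_(0 <= j < m.+2) (-1) ^+ j * q ^+ 'C(j, 2) * qgauss q m.+1 j *
      (q ^+ (m.+1 - j) * qnum q j%:R) * qnum q (m.+1 - j)%:R ^+ 0.
  rewrite /qStirling2_sum mulr_sumr -big_split; apply: eq_big_nat => j /andP[_ le_jm].
  by rewrite /= qnum_subn //; ring.
by rewrite peel sum_qgauss_compl sum_qgauss_shift; ring.
Qed.

Lemma qStirling2_sum0_eq0 (k : nat) : qStirling2_sum q 0 k.+1 = 0.
Proof.
elim: k => [|k IHk]; first by rewrite qStirling2_sum0S expr0 subrr mul0r.
by rewrite qStirling2_sum0S IHk mulr0.
Qed.

Lemma qStirling2_sum_eq0 (n k : nat) : (n < k)%N -> qStirling2_sum q n k = 0.
Proof.
elim: n k => [|n IHn] [|k] // lt_nk; first exact: qStirling2_sum0_eq0.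
rewrite ltnS in lt_nk.
by rewrite qStirling2_sumSS (IHn k.+1 (ltnW lt_nk)) (IHn k lt_nk) mulr0 addr0 mulr0.
Qed.

Lemma sum_qbinomR_qStirling2_sum (x : R) (n : nat) :
  \sum_(0 <= k < n.+1) qbinomR q x k * qStirling2_sum q n k = qnum q x ^+ n.
Proof.
elim: n => [|n IHn].
  rewrite big_nat1 /qbinomR /qStirling2_sum big_nat1 big_geq // /qgauss /qfact.
  by rewrite big_geq // !expr0 /= !mulr1 invr1 !mul1r.
rewrite big_nat_recl // qStirling2_sumS0 mulr0 add0r.
rewrite (eq_big_nat _ _ (F2 := fun k =>
    qbinomR q x k.+1 * qnum q k.+1%:R * qStirling2_sum q n k.+1
  + qbinomR q x k * (q ^+ k * qnum q (x - k%:R)) * qStirling2_sum q n k)); last first.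
  move=> k _; rewrite qStirling2_sumSS mulrA mulrDr; congr (_ + _).
  by rewrite mulrCA qbinomRS; ring.
pose f k := qbinomR q x k * qnum q k%:R * qStirling2_sum q n k.
have shift : \sum_(0 <= k < n.+1) f k.+1 = \sum_(0 <= k < n.+1) f k.
  transitivity (\sum_(0 <= k < n.+2) f k).
    by rewrite [RHS]big_nat_recl // /f qnum0 mulr0 mul0r add0r.
  by rewrite big_nat_recr //= /f (qStirling2_sum_eq0 _ _ (ltnSn n)) mulr0 addr0.
rewrite big_split /= shift /f -big_split /= exprS -IHn mulr_sumr.
apply: eq_big_nat => k _.
by rewrite -(qnum_split k x); ring.
Qed.

End QCalculus.

Lemma qnum_gt0 (R : realType) (q y : R) : 0 < q < 1 -> 0 < y -> 0 < qnum q y.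
Proof.
move=> /andP[q_gt0 q_lt1] y_gt0.
have q_le1 : 0 < q <= 1 by rewrite q_gt0 ltW.
have powR_le1 : q `^ y <= 1 by rewrite -(powRr0 q) ger_powR // ltW.
rewrite divr_gt0 ?subr_gt0 // lt_neqAle powR_le1 andbT powR_eq1.
by rewrite (lt_eqF q_lt1) (gt_eqF y_gt0) ltNge ltW.
Qed.

Lemma qnum_ge0 (R : realType) (q y : R) : 0 < q < 1 -> 0 <= y -> 0 <= qnum q y.
Proof.
move=> q01; rewrite le_eqVlt => /predU1P[<- | y_gt0]; last exact/ltW/qnum_gt0.
by rewrite /qnum powRr0 subrr mul0r.
Qed.

Lemma qnum_compl_add_gt0 (R : realType) (q x : R) : 0 < q < 1 ->
  0 <= x <= 1 -> 0 < qnum q (1 - x) + qnum q x.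
Proof.
move=> q01 /andP[x_ge0 x_le1].
have [-> | x_neq0] := eqVneq x 0.
  by rewrite subr0 ltr_wpDr ?qnum_ge0 ?qnum_gt0.
by rewrite ltr_wpDl ?qnum_ge0 ?subr_ge0 ?qnum_gt0 // lt_neqAle eq_sym x_neq0.
Qed.

Theorem theorem8 (R : realType) (q : R) (n i : nat) (x : R)
  (hq0 : 0 < q) (hq1 : q < 1) (hi1 : (1 <= i)%N) (hin : (i <= n)%N)
  (hx0 : 0 <= x) (hx1 : x <= 1) :
  (qnum q (1 - x) + qnum q x) ^- (n - i) *
    \sum_(i.-1 <= k < n.+1)
       (('C(k, i))%:R / ('C(n, i))%:R) * qBernstein q x k n
  = \sum_(0 <= k < i.+1)
       q ^+ 'C(k, 2) * qbinomR q x k * qfact q k * qStirling2 q i k.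
Proof.
have q_neq1 : q != 1 by rewrite lt_eqF.
have q01 : 0 < q < 1 by rewrite hq0.
have binni_neq0 : 'C(n, i)%:R != 0 :> R by rewrite pnatr_eq0 -lt0n bin_gt0.
have sum_neq0 : qnum q (1 - x) + qnum q x != 0.
  by rewrite gt_eqF // qnum_compl_add_gt0 // hx0.
have rhsE : \sum_(0 <= k < i.+1)
    q ^+ 'C(k, 2) * qbinomR q x k * qfact q k * qStirling2 q i k
  = \sum_(0 <= k < i.+1) qbinomR q x k * qStirling2_sum q i k.
  by apply: eq_big_nat => k _; rewrite -qStirling2_sum_scaled //; ring.
rewrite {}rhsE sum_qbinomR_qStirling2_sum //.
case: i hi1 hin binni_neq0 => // i _ lt_in binni_neq0 /=.
rewrite big_ltn ?ltnS 1?ltnW // bin_small // mul0r mul0r add0r.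
under eq_bigr => k _ do rewrite mulrAC.
rewrite -mulr_suml /qBernstein binomial_factorial_moment //.
by field; rewrite binni_neq0 expf_neq0.
Qed.
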